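(* Let $P$ be a finite poset and $\Bbbk$ a commutative ring with unit. Suppose that for every $a\in P$ one has $\widetilde H_m\bigl(\Delta(P_{<a}),\Bbbk\bigr)=0$ for all $m\le d(a)-2$. Then for every $n$ the simplicial chain complex $C_\bullet(\Delta(P),\Bbbk)$ of the order complex of $P$ and the conic chain complex $\mathcal C_\bullet(P,\Bbbk)$ have isomorphic $n$-th homology.
   Context: For a finite poset $P$ and $a\in P$ put $P_{\le a}=\{x\in P: x\le a\}$ and $P_{<a}=\{x\in P: x<a\}$. For a subset $S\subseteq P$, $\Delta(S)$ denotes the order complex of $S$ (the simplicial complex whose faces are the chains of $S$). The dimension of $a$ is $d(a)=d_P(a)=\dim\Delta(P_{\le a})$. For $n\in\mathbb Z$ put $P^n=\{a\in P: d(a)\le n\}$ and $\Delta^n=\Delta(P^n)$ (so $\Delta^{-1}$ is the empty complex). Faces of order complexes are oriented by listing their vertices in decreasing order. The conic chain complex $\mathcal C_\bullet(P,\Bbbk)$ has $\mathcal C_n(P,\Bbbk)=H_n(\Delta^n,\Delta^{n-1};\Bbbk)$ (relative simplicial homology) for $n\ge 0$, and for $n\ge1$ its differential $\partial_n$ is the composition $\iota_{n-1}\circ\delta_n$, where $\delta_n\colon H_n(\Delta^n,\Delta^{n-1};\Bbbk)\to\widetilde H_{n-1}(\Delta^{n-1};\Bbbk)$ is the connecting map of the long exact sequence of the pair $(\Delta^n,\Delta^{n-1})$ and $\iota_{n-1}\colon \widetilde H_{n-1}(\Delta^{n-1};\Bbbk)\to H_{n-1}(\Delta^{n-1},\Delta^{n-2};\Bbbk)$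 is the (injective) natural map of the long exact sequence of the pair $(\Delta^{n-1},\Delta^{n-2})$. *)

From HB Require Import structures.
From mathcomp Require Import all_boot all_order all_algebra.
Set Implicit Arguments. Unset Strict Implicit. Unset Printing Implicit Defensive.
Import Order.TTheory GRing.Theory Num.Theory.
Local Open Scope ring_scope.

Section Conic.
Variables (disp : Order.disp_t) (P : finPOrderType disp) (k : comPzRingType).

(* simplicial chains on subsets of P: finitely supported coefficient functions
   on finite subsets of P (only chains of P will carry nonzero coefficients) *)
Local Notation chains := {ffun {set P} -> k^o}.

Definition ischain (S : {set P}) : bool :=
  [forall x in S, forall y in S, (x <= y)%O || (y <= x)%O].

Definition uchain (S : {set P}) (n : int) (c : chains) : Prop :=
  forall F, c F != 0 ->
    [/\ F != set0, ischain F, F \subset S & (#|F|%:Z = n + 1)%R].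

(* same, for the augmented complex: the empty chain is the (-1)-face *)
Definition rchain (S : {set P}) (m : int) (c : chains) : Prop :=
  forall F, c F != 0 -> [/\ ischain F, F \subset S & (#|F|%:Z = m + 1)%R].

(* augmented boundary: faces oriented by listing vertices in decreasing order,
   removing x from T :|: {x} gets sign (-1)^#{y in T | x < y} *)
Definition bdr (c : chains) : chains :=
  [ffun T => \sum_(x in ~: T)
     (-1) ^+ #|[set y in T | (x < y)%O]| * c (x |: T)].

(* ordinary (unreduced) boundary: no (-1)-dimensional face *)
Definition bd (c : chains) : chains :=
  [ffun T => if T == set0 then 0 else bdr c T].

Definition rh_vanish (S : {set P}) (m : int) : Prop :=
  forall c, rchain S m c -> bdr c = 0 ->
    exists e, rchain S (m + 1) e /\ c = bdr e.

(* d(a) = dim Delta(P_{<= a}) *)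
Definition dimP (a : P) : int :=
  (\max_(S : {set P} | ischain S && (S \subset [set x | (x <= a)%O])) #|S|)%:Z - 1.

Definition Pn (m : int) : {set P} := [set a | dimP a <= m].

Definition Zs (n : int) (c : chains) : Prop := uchain setT n c /\ bd c = 0.
Definition Bs (n : int) (c : chains) : Prop :=
  exists e, uchain setT (n + 1) e /\ c = bd e.

(* relative cycles of the pair (Delta^n, Delta^{n-1}) in degree n *)
Definition RC (n : int) (c : chains) : Prop :=
  uchain (Pn n) n c /\ uchain (Pn (n - 1)) (n - 1) (bd c).

(* Conic complex: C_n = H_n(Delta^n, Delta^{n-1}) is represented by relative
   cycles c modulo C_n(Delta^{n-1}) + bd C_{n+1}(Delta^n); the differential
   iota o delta sends [c] to the class of bd c in H_{n-1}(Delta^{n-1},Delta^{n-2}).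
   Zc n / Bc n are the preimages in the relative cycles of the cycles and
   boundaries of the conic complex, so H_n(conic) = Zc n / Bc n. *)
Definition Zc (n : int) (c : chains) : Prop :=
  RC n c /\ exists a b, uchain (Pn (n - 2)) (n - 1) a /\ uchain (Pn (n - 1)) n b
                      /\ bd c = a + bd b.
Definition Bc (n : int) (c : chains) : Prop :=
  exists e a b, [/\ RC (n + 1) e, uchain (Pn (n - 1)) n a,
                    uchain (Pn n) (n + 1) b & c = bd e + a + bd b].

End Conic.

(* The k-modules Z1/B1 and Z2/B2 (subquotients of V1, V2) are isomorphic:
   there is a map on representatives inducing a well-defined k-linear bijection
   Z1/B1 -> Z2/B2 (linearity only required modulo B2, so that every module
   isomorphism of the quotients arises this way). *)
Definition subquot_iso (k : pzRingType) (V1 V2 : lmodType k)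
  (Z1 B1 : V1 -> Prop) (Z2 B2 : V2 -> Prop) : Prop :=
  exists f : V1 -> V2,
    [/\ forall x, Z1 x -> Z2 (f x),
        forall x y, Z1 x -> Z1 y -> B2 (f (x + y) - (f x + f y)),
        forall (r : k) x, Z1 x -> B2 (f (r *: x) - r *: f x),
        forall x y, Z1 x -> Z1 y -> B1 (x - y) -> B2 (f x - f y)
      & forall x y, Z1 x -> Z1 y -> B2 (f x - f y) -> B1 (x - y)] /\
    forall y, Z2 y -> exists2 x, Z1 x & B2 (y - f x).

From HB Require Import structures.
From mathcomp Require Import all_boot all_order all_algebra.
From mathcomp Require Import zify.
From Stdlib Require Import ClassicalEpsilon.
Set Implicit Arguments. Unset Strict Implicit. Unset Printing Implicit Defensive.
Import Order.TTheory GRing.Theory Num.Theory.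
Local Open Scope ring_scope.

(* Filter the chains of Delta(P) by the subcomplexes Delta^p.  Let c be an
   m-chain of Delta^p, m < p, with boundary in Delta^(p-1).  For a of
   dimension p, the faces of c through a form the cone from a over the link of
   a in c, a reduced (m-1)-cycle of Delta(P_<a); by hypothesis it bounds some
   e, and the cone formula rewrites that part of c as e minus the boundary of
   the cone over e.  A chain of P^p meets at most one element of dimension p,
   so c is a chain of Delta^(p-1) plus a boundary, with the same boundary.
   Iterating, every n-cycle is homologous to an n-cycle of Delta^n, and an
   n-chain of Delta^n that bounds already bounds in Delta^(n+1).  Since
   Delta^(n-1) has no n-simplices, the conic n-cycles are the n-cycles of
   Delta^n and the conic boundaries are the boundaries among them, so both
   homologies are Z_n(Delta^n) / (Z_n(Delta^n) :&: B_n(Delta)): this is the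
   second isomorphism theorem. *)

Section SecondIsomorphism.
Variables (R : pzRingType) (V : lmodType R).
Implicit Types (x y z : V).

Definition submod_prop (A : V -> Prop) : Prop :=
  A 0 /\ forall (r : R) x y, A x -> A y -> A (r *: x + y).

Section SubmodProp.
Variables (A : V -> Prop) (hA : submod_prop A).

Lemma submodD x y : A x -> A y -> A (x + y).
Proof. by move=> Ax Ay; rewrite -[x in x + _]scale1r; apply: hA.2. Qed.

Lemma submodZ (r : R) x : A x -> A (r *: x).
Proof. by move=> Ax; rewrite -[_ *: _]addr0; apply: hA.2 => //; exact: hA.1. Qed.

Lemma submodB x y : A x -> A y -> A (x - y).
Proof. by move=> Ax Ay; rewrite addrC -scaleN1r; apply: hA.2. Qed.

Lemma submod_sum (I : finType) (Q : pred I) (F : I -> V) :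
  (forall i, Q i -> A (F i)) -> A (\sum_(i | Q i) F i).
Proof. by apply: big_ind; [exact: hA.1 | exact: submodD]. Qed.

Lemma submod_sym x y : A (x - y) -> A (y - x).
Proof. by move=> h; rewrite -opprB -sub0r; apply: submodB => //; exact: hA.1. Qed.

Lemma submod_trans y x z : A (x - y) -> A (y - z) -> A (x - z).
Proof. by move=> hxy hyz; rewrite -[x](subrK y) -addrA; apply: submodD. Qed.

Lemma submod_addD x1 x2 y1 y2 : A (x1 - y1) -> A (x2 - y2) -> A (x1 + x2 - (y1 + y2)).
Proof. by move=> h1 h2; rewrite opprD addrACA; apply: submodD. Qed.

Lemma submod_scaleD (r : R) x y : A (x - y) -> A (r *: x - r *: y).
Proof. by move=> h; rewrite -scalerBr; apply: submodZ. Qed.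

End SubmodProp.

Lemma second_iso_subquot (Z1 B1 Z2 B2 : V -> Prop) :
  submod_prop Z1 -> submod_prop Z2 -> submod_prop B1 ->
  (forall x, Z2 x -> Z1 x) -> (forall x, B2 x -> B1 x) ->
  (forall x, Z2 x -> B1 x -> B2 x) ->
  (forall x, Z1 x -> exists2 y, Z2 y & B1 (x - y)) ->
  subquot_iso Z1 B1 Z2 B2.
Proof.
move=> hZ1 hZ2 hB1 sZ sB B2I dec.
pose Q x y := Z2 y /\ B1 (x - y); pose f x := epsilon (inhabits 0) (Q x).
have fP x : Z1 x -> Q x (f x).
  by case/dec => y Z2y B1xy; apply: (epsilon_spec _ (Q x)); exists y.
have fZ x : Z1 x -> Z2 (f x) by move/fP=> [].
have fB x : Z1 x -> B1 (x - f x) by move/fP=> [].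
have fBV x : Z1 x -> B1 (f x - x) by move/fB/(submod_sym hB1).
exists f; split; [split|].
- exact: fZ.
- move=> x y Z1x Z1y; have Z1xy := submodD hZ1 Z1x Z1y.
  apply: B2I; first exact: (submodB hZ2 (fZ _ Z1xy) (submodD hZ2 (fZ _ Z1x) (fZ _ Z1y))).
  exact: (submod_trans hB1 (fBV _ Z1xy) (submod_addD hB1 (fB x Z1x) (fB y Z1y))).
- move=> r x Z1x; have Z1rx := submodZ hZ1 r Z1x.
  apply: B2I; first exact: (submodB hZ2 (fZ _ Z1rx) (submodZ hZ2 r (fZ _ Z1x))).
  exact: (submod_trans hB1 (fBV _ Z1rx) (submod_scaleD hB1 r (fB x Z1x))).
- move=> x y Z1x Z1y B1xy; apply: B2I; first exact: (submodB hZ2 (fZ _ Z1x) (fZ _ Z1y)).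
  exact: (submod_trans hB1 (fBV x Z1x) (submod_trans hB1 B1xy (fB y Z1y))).
- move=> x y Z1x Z1y /sB B1fxy.
  exact: (submod_trans hB1 (fB x Z1x) (submod_trans hB1 B1fxy (fBV y Z1y))).
move=> y Z2y; exists y; first exact: sZ.
have Z1y := sZ y Z2y.
by apply: B2I; [exact: (submodB hZ2 Z2y (fZ _ Z1y)) | exact: fB].
Qed.

End SecondIsomorphism.

Section OrderComplex.
Variables (disp : Order.disp_t) (P : finPOrderType disp) (k : comPzRingType).
Local Notation chains := {ffun {set P} -> k^o}.
Local Notation below a := [set x : P | (x < a)%O].
Local Notation atmost a := [set x : P | (x <= a)%O].
Local Notation uchain := (@uchain _ P k).
Implicit Types (S T F : {set P}) (c d e : chains) (a x y : P).

Lemma ischainP S : reflect {in S &, forall x y, (x <= y)%O || (y <= x)%O} (ischain S).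
Proof.
apply: (iffP forall_inP) => [h x y xS yS | h x xS]; last by apply/forall_inP => y; apply: h.
by have /forall_inP := h x xS; apply.
Qed.

Lemma ischain_sub S T : T \subset S -> ischain S -> ischain T.
Proof. by move=> /subsetP sTS /ischainP cS; apply/ischainP => x y /sTS xS /sTS; apply: cS. Qed.

Lemma ischain_lt S x y : ischain S -> x \in S -> y \in S -> x != y ->
  (x < y)%O || (y < x)%O.
Proof. by move=> /ischainP cS xS yS; rewrite !lt_neqAle eq_sym => ->; apply: cS. Qed.

Lemma ischainU1_below a T : T \subset below a -> ischain T -> ischain (a |: T).
Proof.
move=> /subsetP sT /ischainP cT; apply/ischainP => u v.
rewrite !in_setU1 => /predU1P[-> | uT] /predU1P[-> | vT]; rewrite ?lexx //.
- by have := sT v vT; rewrite inE => /ltW ->; rewrite orbT.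
- by have := sT u uT; rewrite inE => /ltW ->.
- exact: cT.
Qed.

Lemma notin_below a : a \notin below a.
Proof. by rewrite inE ltxx. Qed.

Lemma cardU1_below a T : T \subset below a -> #|a |: T| = #|T|.+1.
Proof. by move=> sT; rewrite cardsU1 (contraNN (subsetP sT a) (notin_below a)). Qed.

Definition dimn a : nat :=
  \max_(S : {set P} | ischain S && (S \subset atmost a)) #|S|.

Lemma dimPE a : dimP a = (dimn a)%:Z - 1.
Proof. by []. Qed.

Lemma dimn_ge S a : ischain S -> S \subset atmost a -> (#|S| <= dimn a)%N.
Proof. by move=> cS sS; apply: (leq_bigmax_cond (F := fun S => #|S|)); rewrite cS sS. Qed.

Lemma dimn_gt0 a : (0 < dimn a)%N.
Proof.
rewrite -(cards1 a) dimn_ge ?sub1set ?inE //.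
by apply/ischainP => x y; rewrite !inE => /eqP-> /eqP->; rewrite lexx.
Qed.

Lemma dimn_lt x y : (x < y)%O -> (dimn x < dimn y)%N.
Proof.
move=> xy; rewrite -[dimn y]prednK ?dimn_gt0 // ltnS.
apply/bigmax_leqP => S /andP[cS sS]; rewrite -ltnS prednK ?dimn_gt0 //.
have sSy : S \subset below y.
  by apply/subsetP => u /(subsetP sS); rewrite !inE => /le_lt_trans; apply.
rewrite -(cardU1_below sSy) dimn_ge ?ischainU1_below //.
rewrite subUset sub1set inE lexx; apply: subset_trans sSy _.
by apply/subsetP => u; rewrite !inE => /ltW.
Qed.

Lemma dimP_lt x y : (x < y)%O -> dimP x < dimP y.
Proof. by move/dimn_lt; rewrite !dimPE; lia. Qed.

Lemma ischain_max F : F != set0 -> ischain F -> exists2 t, t \in F & F \subset atmost t.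
Proof.
case/set0Pn => t0 t0F cF; case: (arg_maxnP dimn t0F) => t tF maxt; exists t => //.
apply/subsetP => x xF; rewrite inE; have [-> // | xt] := eqVneq x t.
case/orP: (ischain_lt cF xF tF xt) => [/ltW // | /dimn_lt].
by rewrite ltnNge (maxt x xF : (dimn x <= dimn t)%N).
Qed.

Lemma card_chain_Pn F q : F != set0 -> ischain F -> F \subset Pn P q -> #|F|%:Z <= q + 1.
Proof.
move=> F0 cF sF; have [t tF sFt] := ischain_max F0 cF.
have := dimn_ge cF sFt; have := subsetP sF t tF; rewrite inE dimPE; lia.
Qed.

Lemma PnS p q : p <= q -> Pn P p \subset Pn P q.
Proof. by move=> pq; apply/subsetP => x; rewrite !inE => /le_trans; apply. Qed.

Lemma PnT q : #|P|%:Z <= q -> Pn P q = setT.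
Proof.
move=> Pq; apply/setP => a; rewrite !inE dimPE.
have : (dimn a <= #|P|)%N by apply/bigmax_leqP => S _; apply: max_card.
lia.
Qed.

Lemma below_Pn a : below a \subset Pn P (dimP a - 1).
Proof. by apply/subsetP => y; rewrite !inE => /dimP_lt; lia. Qed.

Lemma uchain_submod S n : submod_prop (uchain S n).
Proof.
split=> [F | r c1 c2 u1 u2 F]; first by rewrite ffunE eqxx.
rewrite !ffunE; have [/u1 // | /negPn/eqP c1F0] := boolP (c1 F != 0).
by rewrite c1F0 scaler0 add0r => /u2.
Qed.

Lemma uchainS S S' n c : S \subset S' -> uchain S n c -> uchain S' n c.
Proof. by move=> sS uc F /uc [F0 cF sF cardF]; split=> //; apply: subset_trans sF sS. Qed.

Lemma uchain_Pn_gt q n c : uchain (Pn P q) n c -> q < n -> c = 0.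
Proof.
move=> uc qn; apply/ffunP => F; rewrite ffunE; apply/eqP.
apply: contraT => /uc [F0 cF sF cardF].
by have := card_chain_Pn F0 cF sF; lia.
Qed.

Lemma uchain_lt0 S n c : n < 0 -> uchain S n c -> c = 0.
Proof.
move=> n0 uc; apply/ffunP => F; rewrite ffunE; apply/eqP.
by apply: contraT => /uc [F0 cF sF cardF]; move: F0; rewrite -card_gt0; lia.
Qed.

Lemma bdr_is_linear : linear (@bdr disp P k).
Proof.
move=> r c1 c2; apply/ffunP => T; rewrite !ffunE scaler_sumr -big_split.
by apply: eq_bigr => x _; rewrite !ffunE mulrDr mulrCA.
Qed.

HB.instance Definition _ :=
  GRing.isLinear.Build k chains chains *:%R (@bdr disp P k) bdr_is_linear.

Lemma bd_is_linear : linear (@bd disp P k).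
Proof.
move=> r c1 c2; apply/ffunP => T; rewrite !ffunE.
case: ifP => _; first by rewrite scaler0 addr0.
by have /ffunP/(_ T) := bdr_is_linear r c1 c2; rewrite !ffunE.
Qed.

HB.instance Definition _ :=
  GRing.isLinear.Build k chains chains *:%R (@bd disp P k) bd_is_linear.

Lemma bd_bdr c1 c2 : bdr c1 = bdr c2 -> bd c1 = bd c2.
Proof. by move=> h; apply/ffunP => T; rewrite [bd c1 T]ffunE [bd c2 T]ffunE h. Qed.

Definition cone a e : chains := [ffun F : {set P} => if a \in F then e (F :\ a) else 0].

Lemma cone0 a : cone a 0 = 0.
Proof. by apply/ffunP => F; rewrite !ffunE if_same. Qed.

Lemma card_above_setD1 a x T : a \in T -> (x < a)%O ->
  #|[set y in T | (x < y)%O]| = #|[set y in T :\ a | (x < y)%O]|.+1.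
Proof.
move=> aT xa.
have -> : [set y in T | (x < y)%O] = a |: [set y in T :\ a | (x < y)%O].
  by apply/setP => y; rewrite !inE; case: eqVneq => [-> | ] //=; rewrite aT xa.
by rewrite cardsU1 !inE eqxx.
Qed.

Lemma bdr_cone a e : (forall T, e T != 0 -> T \subset below a) ->
  bdr (cone a e) = e - cone a (bdr e).
Proof.
move=> supp; have e0 T : ~~ (T \subset below a) -> e T = 0.
  by move=> nT; apply/eqP; apply: contraNT nT; apply: supp.
have ea T : a \in T -> e T = 0.
  by move=> aT; apply: e0; apply/subsetPn; exists a; rewrite ?notin_below.
apply/ffunP => T; rewrite ffunE; under eq_bigr => x _ do rewrite ffunE.
rewrite !ffunE; case: (boolP (a \in T)) => aT.
- rewrite ea // sub0r [in RHS](bigD1 a) ?inE ?eqxx //= setD1K // ea // mulr0 add0r.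
  rewrite -sumrN; apply: eq_big => [x | x xT].
    by rewrite !inE; case: eqVneq => [-> | ]; rewrite ?aT ?andbF ?andbT.
  have xa : x != a by apply: contraTneq xT => ->; rewrite inE aT.
  have -> : (x |: T) :\ a = x |: (T :\ a).
    by apply/setP => y; rewrite !inE; case: (eqVneq y x) => [-> | ]; rewrite ?xa.
  rewrite in_setU1 aT orbT; case: (boolP (x < a)%O) => [xlta | xNlta].
    by rewrite (card_above_setD1 aT) // exprS mulN1r mulNr.
  by rewrite e0 ?mulr0 ?oppr0 // subUset sub1set inE (negbTE xNlta).
rewrite subr0 (bigD1 a) ?inE //= eqxx setU1K // big1 ?addr0 => [|x /andP[_ xa]].
  have [/supp sT | /negPn/eqP ->] := boolP (e T != 0); last by rewrite mulr0.
  suff -> : [set y in T | (a < y)%O] = set0 by rewrite cards0 mul1r.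
  apply/setP => y; rewrite !inE; case yT: (y \in T) => //=.
  by have := subsetP sT y yT; rewrite inE => /lt_gtF.
by rewrite in_setU1 eq_sym (negbTE xa) (negbTE aT) mulr0.
Qed.

Lemma uchain_cone a m e : rchain (below a) m e -> uchain setT (m + 1) (cone a e).
Proof.
move=> re F; rewrite ffunE; case: ifP => [aF /re [cF sF cardF] | _]; last by rewrite eqxx.
rewrite -(setD1K aF); split.
- by apply/set0Pn; exists a; rewrite setU11.
- exact: ischainU1_below.
- exact: subsetT.
- by rewrite (cardU1_below sF); lia.
Qed.

Definition level p := [set a : P | dimP a == p].

Definition star a c : chains := [ffun F : {set P} => if a \in F then c F else 0].

Definition link a c : chains :=
  [ffun T : {set P} => if T \subset below a then c (a |: T) else 0].

Definition off_level p c : chains :=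
  [ffun F : {set P} => if F :&: level p == set0 then c F else 0].

Lemma chain_level_below p a F : ischain F -> F \subset Pn P p -> dimP a = p ->
  a \in F -> F :\ a \subset below a.
Proof.
move=> cF sF da aF; apply/subsetP => y /setD1P[ya yF]; rewrite inE.
case/orP: (ischain_lt cF yF aF ya) => // /dimP_lt.
by have := subsetP sF y yF; rewrite inE da; lia.
Qed.

Lemma chain_level_uniq p a b F : ischain F -> F \subset Pn P p ->
  dimP a = p -> dimP b = p -> a \in F -> b \in F -> b = a.
Proof.
move=> cF sF da db aF bF; apply/eqP; apply: contraT => ba.
have /(subsetP (chain_level_below cF sF da aF)) : b \in F :\ a by rewrite !inE ba.
by rewrite inE => /dimP_lt; rewrite da db ltxx.
Qed.

Lemma bdr_star a c T : a \in T -> bdr (star a c) T = bdr c T.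
Proof. by move=> aT; rewrite !ffunE; apply: eq_bigr => x _; rewrite ffunE setU1r. Qed.

Lemma link_below a c T : link a c T != 0 -> T \subset below a.
Proof. by rewrite ffunE; case: ifP; rewrite ?eqxx. Qed.

Definition descends_to q m c :=
  exists d b, [/\ uchain (Pn P q) m d, uchain setT (m + 1) b, c = d + bd b & bd d = bd c].

Lemma uchain_descends_to q m c : uchain (Pn P q) m c -> descends_to q m c.
Proof.
by move=> uc; exists c, 0; rewrite raddf0 addr0; split=> //; exact: (uchain_submod _ _).1.
Qed.

Lemma descends_to_submod q m : submod_prop (descends_to q m).
Proof.
split=> [|r x y [d [b [ud ub -> bdx]]] [d' [b' [ud' ub' -> bdy]]]].
  exact/uchain_descends_to/(uchain_submod _ _).1.
exists (r *: d + d'), (r *: b + b'); split.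
- exact: (uchain_submod _ _).2.
- exact: (uchain_submod _ _).2.
- by rewrite linearP scalerDr addrACA.
- by rewrite !linearP /= bdx bdy.
Qed.

Local Notation Zs := (@Zs _ P k).
Local Notation Bs := (@Bs _ P k).
Local Notation Zc := (@Zc _ P k).
Local Notation Bc := (@Bc _ P k).

Lemma Zc_cellular n c : Zc n c <-> uchain (Pn P n) n c /\ bd c = 0.
Proof.
split=> [[[uc _] [a [b [ua [ub ->]]]]] | [uc bc]].
  by rewrite (uchain_Pn_gt ua) ?(uchain_Pn_gt ub) ?raddf0 ?addr0 //; lia.
split; first by split=> //; rewrite bc; exact: (uchain_submod _ _).1.
exists 0, 0; rewrite raddf0 addr0 bc.
by split; [|split]; rewrite //; exact: (uchain_submod _ _).1.
Qed.

Lemma Zc_submod n : submod_prop (Zc n).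
Proof.
split=> [|r x y /Zc_cellular[ux bx] /Zc_cellular[uy b_y]]; apply/Zc_cellular.
  by rewrite raddf0; split=> //; exact: (uchain_submod _ _).1.
by rewrite linearP /= bx b_y scaler0 addr0; split=> //; exact: (uchain_submod _ _).2.
Qed.

Lemma Zs_submod n : submod_prop (Zs n).
Proof.
split=> [|r x y [ux bx] [uy b_y]].
  by rewrite /Zs raddf0; split=> //; exact: (uchain_submod _ _).1.
by rewrite /Zs linearP /= bx b_y scaler0 addr0; split=> //; exact: (uchain_submod _ _).2.
Qed.

Lemma Bs_submod n : submod_prop (Bs n).
Proof.
split=> [|r x y [e [ue ->]] [e' [ue' ->]]].
  by exists 0; rewrite raddf0; split=> //; exact: (uchain_submod _ _).1.
by exists (r *: e + e'); rewrite linearP; split=> //; exact: (uchain_submod _ _).2.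
Qed.

Lemma Zc_Zs n c : Zc n c -> Zs n c.
Proof. by move/Zc_cellular => [uc bc]; split=> //; apply: uchainS uc; apply: subsetT. Qed.

Lemma Bc_Bs n c : Bc n c -> Bs n c.
Proof.
case=> e [a [b [[ue _] ua ub ->]]]; rewrite (uchain_Pn_gt ua) ?addr0; last by lia.
exists (e + b); rewrite raddfD; split=> //.
exact: (submodD (uchain_submod _ _) (uchainS (subsetT _) ue) (uchainS (subsetT _) ub)).
Qed.

Section Descent.
Hypothesis below_acyclic :
  forall a m, m <= dimP a - 2 -> rh_vanish k (below a) m.

Section Step.
Variables (p m : int) (c : chains).
Hypotheses (m_ge0 : 0 <= m) (m_lt_p : m < p).
Hypotheses (uc : uchain (Pn P p) m c) (ubc : uchain (Pn P (p - 1)) (m - 1) (bd c)).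

Lemma star_cone a : dimP a = p -> star a c = cone a (link a c).
Proof.
move=> da; apply/ffunP => F; rewrite !ffunE; case: ifP => // aF.
rewrite setD1K //; case: ifP => // sF; apply/eqP; apply: contraFT sF.
by move=> /uc [_ cF sFp _]; apply: chain_level_below cF sFp da aF.
Qed.

Lemma bdr_link a : dimP a = p -> bdr (link a c) = 0.
Proof.
move=> da; apply/ffunP => S; rewrite [RHS]ffunE.
have [sS | nS] := boolP (S \subset below a); last first.
  by rewrite ffunE big1 // => x _; rewrite ffunE subUset (negbTE nS) andbF mulr0.
have aS : a \notin S := contraNN (subsetP sS a) (notin_below a).
have aT : a \in a |: S := setU11 a S.
have : bd c (a |: S) = 0.
  apply/eqP; apply: contraT => /ubc [_ _ sub _].
  by have := subsetP sub a aT; rewrite inE da; lia.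
have aS0 : a |: S == set0 = false by apply/negbTE/set0Pn; exists a.
rewrite ffunE aS0 -(bdr_star c aT) star_cone // bdr_cone; last exact: link_below.
rewrite !ffunE aT setU1K // subUset sub1set (negbTE (notin_below a)) /= sub0r.
by move/eqP; rewrite oppr_eq0 => /eqP.
Qed.

Lemma rchain_link a : dimP a = p -> rchain (below a) (m - 1) (link a c).
Proof.
move=> da T lT; have sT := link_below lT; move: lT; rewrite ffunE sT => /uc [_ cT _].
rewrite (cardU1_below sT) => cardT; split=> //; last by lia.
exact: ischain_sub (subsetUr _ _) cT.
Qed.

Lemma star_descends a : dimP a = p -> descends_to (p - 1) m (star a c).
Proof.
move=> da; have [|e [re link_e]] :=
  below_acyclic (m := m - 1) _ (rchain_link da) (bdr_link da); first by lia.
rewrite subrK in re.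
have e_below T : e T != 0 -> T \subset below a by move=> /re [].
have e0 : e set0 = 0 by apply/eqP; apply: contraT => /re [_ _]; rewrite cards0; lia.
have bd_cone : bd (cone a e) = e - star a c.
  apply/ffunP => T; rewrite [LHS]ffunE bdr_cone // -link_e -star_cone //.
  by case: eqP => [-> | //]; rewrite !ffunE inE e0 subrr.
exists e, (- cone a e); split.
- move=> F /re [cF sF cardF]; split=> //; first by rewrite -card_gt0; lia.
  by rewrite -da; apply: subset_trans sF (below_Pn a).
- by rewrite -scaleN1r; exact: (submodZ (uchain_submod _ _) _ (uchain_cone re)).
- by rewrite raddfN /= bd_cone opprB addrC subrK.
apply: bd_bdr; rewrite -link_e star_cone // bdr_cone; last exact: link_below.
by rewrite bdr_link // cone0 subr0.
Qed.

Lemma uchain_off_level : uchain (Pn P (p - 1)) m (off_level p c).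
Proof.
move=> F; rewrite ffunE; case: (F :&: level p =P set0) => [FL | _]; last by rewrite eqxx.
move=> /uc [F0 cF sF cardF]; split=> //; apply/subsetP => y yF.
move/setP: FL => /(_ y); have := subsetP sF y yF; rewrite !inE yF /=; lia.
Qed.

Lemma off_level_star_decomposition : c = off_level p c + \sum_(a in level p) star a c.
Proof.
apply/ffunP => F; rewrite !ffunE sum_ffunE.
have [cF0 | /uc [_ cF sF _]] := eqVneq (c F) 0.
  by rewrite cF0 if_same big1 ?addr0 // => a _; rewrite ffunE cF0 if_same.
case: (set_0Vmem (F :&: level p)) => [FL | [a /setIP[aF aL]]].
  rewrite FL eqxx big1 ?addr0 // => a aL; rewrite ffunE; case: ifP => // aF.
  by move/setP: FL => /(_ a); rewrite in_setI aF aL inE.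
have -> : (F :&: level p == set0) = false by apply/negbTE/set0Pn; exists a; rewrite inE aF.
rewrite add0r (bigD1 a) //= ffunE aF big1 ?addr0 // => b /andP[bL ba]; rewrite ffunE.
case: ifP => // bF; move: aL bL; rewrite !inE => /eqP da /eqP db.
by rewrite (chain_level_uniq cF sF da db aF bF) eqxx in ba.
Qed.

Lemma descends_step : descends_to (p - 1) m c.
Proof.
rewrite off_level_star_decomposition; apply: (submodD (descends_to_submod _ _)).
  exact: uchain_descends_to uchain_off_level.
apply: (submod_sum (descends_to_submod _ _)) => a.
by rewrite inE => /eqP; apply: star_descends.
Qed.

End Step.

Lemma descends_to_iter m (j : nat) c : 0 <= m ->
  uchain (Pn P (m + j%:Z)) m c -> uchain (Pn P (m - 1)) (m - 1) (bd c) ->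
  descends_to m m c.
Proof.
move=> m_ge0; elim: j c => [|j IH] c uc ubc.
  by apply: uchain_descends_to; rewrite addr0 in uc.
have [||d [b [ud ub cE bd_eq]]] := descends_step (p := m + j.+1%:Z) m_ge0 _ uc.
- lia.
- by apply: uchainS ubc; apply: PnS; lia.
rewrite (_ : m + j.+1%:Z - 1 = m + j%:Z) in ud; last by lia.
have [|d' [b' [ud' ub' dE bd_eq']]] := IH d ud; first by rewrite bd_eq.
exists d', (b' + b); split=> //.
- exact: (submodD (uchain_submod _ _) ub' ub).
- by rewrite cE dE raddfD addrA.
- by rewrite bd_eq' bd_eq.
Qed.

Lemma cellular_descent m c : uchain setT m c ->
  uchain (Pn P (m - 1)) (m - 1) (bd c) -> descends_to m m c.
Proof.
move=> uc ubc; have [m_lt0 | m_ge0] := ltP m 0.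
  by rewrite (uchain_lt0 m_lt0 uc); exact: (descends_to_submod _ _).1.
apply: (descends_to_iter (j := (#|P| + `|m|)%N)) => //.
by rewrite PnT //; lia.
Qed.

Lemma Bs_Bc n c : uchain (Pn P n) n c -> Bs n c -> Bc n c.
Proof.
move=> uc [w [uw cw]]; have [|d [b [ud _ _ bd_eq]]] := cellular_descent uw.
  by rewrite -cw addrK.
exists d, 0, 0; split; [|exact: (uchain_submod _ _).1 ..|].
  by split; rewrite // bd_eq -cw addrK.
by rewrite bd_eq cw raddf0 !addr0.
Qed.

Lemma Zs_cellular n z : Zs n z -> exists2 y, Zc n y & Bs n (z - y).
Proof.
case=> uz bz; have [|d [b [ud ub zE bd_eq]]] := cellular_descent uz.
  by rewrite bz; exact: (uchain_submod _ _).1.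
exists d; first by apply/Zc_cellular; rewrite bd_eq bz.
by exists b; split; rewrite // zE addrC addKr.
Qed.

End Descent.

End OrderComplex.

Theorem mainTheorem1 (disp : Order.disp_t) (P : finPOrderType disp)
    (k : comPzRingType) :
  (forall (a : P) (m : int), m <= dimP a - 2 ->
     rh_vanish k [set x | (x < a)%O] m) ->
  forall n : int,
    subquot_iso (@Zs _ P k n) (@Bs _ P k n) (@Zc _ P k n) (@Bc _ P k n).
Proof.
move=> below_acyclic n; apply: second_iso_subquot.
- exact: Zs_submod.
- exact: Zc_submod.
- exact: Bs_submod.
- exact: Zc_Zs.
- exact: Bc_Bs.
- by move=> c /Zc_cellular[uc _]; apply: Bs_Bc.
- exact: Zs_cellular.
Qed.
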